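(* Let $i<s<j<t$ be indices in $[1,m+n]$. Then in $U_q$ the following identities hold: $$[E_{ij},F_{st}]=(q_j^{-1}-q_j)\,K_sK_j^{-1}\,F_{jt}E_{is},\qquad [E_{st},F_{ij}]=(q_j-q_j^{-1})\,F_{is}E_{jt}\,K_s^{-1}K_j .$$
   Context: Let $m,n\ge 1$, let $q$ be an indeterminate, and let indices range over $[1,m+n]=\{1,\dots,m+n\}$. Put $q_i=q$ if $i\le m$ and $q_i=q^{-1}$ if $i>m$. Let $\mathcal I_0=\{(i,j):1\le i<j\le m \text{ or } m+1\le i<j\le m+n\}$, $\mathcal I_1=\{(i,j):1\le i\le m<j\le m+n\}$. The quantum supergroup $U_q=U_q(\mathfrak{gl}(m|n))$ is the associative $\mathbb C(q)$-superalgebra generated by $K_j^{\pm1}$ ($j\in[1,m+n]$) and $E_{i,i+1},F_{i,i+1}$ ($1\le i<m+n$), where $K_j^{\pm1}$ and $E_{i,i+1},F_{i,i+1}$ for $i\ne m$ are even and $E_{m,m+1},F_{m,m+1}$ are odd, subject to: $K_iK_j=K_jK_i$, $K_iK_i^{-1}=1$; $K_iE_{j,j+1}K_i^{-1}=q_i^{\delta_{ij}-\delta_{i,j+1}}E_{j,j+1}$, $K_iF_{j,j+1}K_i^{-1}=q_i^{-(\delta_{ij}-\delta_{i,j+1})}F_{j,j+1}$; $[E_{i,i+1},F_{j,j+1}]=\delta_{ij}\frac{K_iK_{i+1}^{-1}-K_i^{-1}K_{i+1}}{q_i-q_i^{-1}}$; $E_{m,m+1}^2=F_{m,m+1}^2=0$;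 $E_{i,i+1}E_{j,j+1}=E_{j,j+1}E_{i,i+1}$ and $F_{i,i+1}F_{j,j+1}=F_{j,j+1}F_{i,i+1}$ for $|i-j|>1$; for $|i-j|=1$, $i\neq m$, and $X\in\{E,F\}$: $X_{i,i+1}^2X_{j,j+1}-(q+q^{-1})X_{i,i+1}X_{j,j+1}X_{i,i+1}+X_{j,j+1}X_{i,i+1}^2=0$; and $[E_{m-1,m+2},E_{m,m+1}]=[F_{m-1,m+2},F_{m,m+1}]=0$. Here for homogeneous $x,y$, $[x,y]=xy-(-1)^{\bar x\bar y}yx$ (super commutator, $\bar x$ the parity). For $i<j$ with $j>i+1$, elements $E_{ij},F_{ij}$ are defined recursively by $E_{ij}=E_{ic}E_{cj}-q_c^{-1}E_{cj}E_{ic}$ and $F_{ij}=-q_cF_{ic}F_{cj}+F_{cj}F_{ic}$ for $i<c<j$ (independent of the choice of $c$); $E_{ij},F_{ij}$ are odd if $(i,j)\in\mathcal I_1$ and even otherwise. *)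

From HB Require Import structures.
From mathcomp Require Import all_boot all_order all_algebra fraction.
Set Implicit Arguments. Unset Strict Implicit. Unset Printing Implicit Defensive.
Import Order.TTheory GRing.Theory Num.Theory.
Local Open Scope ring_scope.

(* The base field C(q): C a (model of the) complex numbers, q = 'X. *)
Definition Cq (C : numClosedFieldType) : fieldType := {fraction {poly C}}.
Definition qind (C : numClosedFieldType) : Cq C := @FracField.tofrac {poly C} 'X.

Section Uq.
Variables (F : fieldType) (q : F) (m n : nat).

Definition qi (i : nat) : F := if (i <= m)%N then q else q^-1.

(* parity of (i,j), i<j : odd iff (i,j) in I_1 *)
Definition par (i j : nat) : bool := ((i <= m) && (m < j))%N.

Variable A : algType F.

(* super commutator for homogeneous elements of parities a, b *)
Definition scomm (a b : bool) (x y : A) : A := x * y - (-1) ^+ (a && b) * (y * x).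

(* e i = E_{i,i+1}, f i = F_{i,i+1} *)
Variables (e f : nat -> A).

(* Ed i d = E_{i,i+d+1}, defined with c = i+1 in the recursion *)
Fixpoint Ed (i d : nat) : A :=
  match d with
  | 0 => e i
  | d'.+1 => e i * Ed i.+1 d' - (qi i.+1)^-1 *: (Ed i.+1 d' * e i)
  end.
Fixpoint Fd (i d : nat) : A :=
  match d with
  | 0 => f i
  | d'.+1 => - (qi i.+1 *: (f i * Fd i.+1 d')) + Fd i.+1 d' * f i
  end.
Definition Eij (i j : nat) : A := Ed i (j - i - 1).
Definition Fij (i j : nat) : A := Fd i (j - i - 1).

Definition dexp (i j : nat) : int := (i == j)%:Z - (i == j.+1)%:Z.

Variables (K Kinv : nat -> A).

Definition Uq_relations : Prop :=
     (forall i j, (1 <= i <= m + n)%N -> (1 <= j <= m + n)%N -> K i * K j = K j * K i) /\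
      (forall i, (1 <= i <= m + n)%N -> K i * Kinv i = 1 /\ Kinv i * K i = 1) /\
      (forall i j, (1 <= i <= m + n)%N -> (1 <= j < m + n)%N ->
         K i * e j * Kinv i = (qi i ^ dexp i j) *: e j /\
         K i * f j * Kinv i = (qi i ^ (- dexp i j)) *: f j) /\
      (forall i j, (1 <= i < m + n)%N -> (1 <= j < m + n)%N ->
         scomm (i == m) (j == m) (e i) (f j) =
         if i == j then (qi i - (qi i)^-1)^-1 *: (K i * Kinv i.+1 - Kinv i * K i.+1)
         else 0) /\
      e m * e m = 0 /\ f m * f m = 0 /\
      (forall i j, (1 <= i < m + n)%N -> (1 <= j < m + n)%N ->
         (i.+1 < j)%N || (j.+1 < i)%N ->
         e i * e j = e j * e i /\ f i * f j = f j * f i) /\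
      (forall i j, (1 <= i < m + n)%N -> (1 <= j < m + n)%N ->
         (j == i.+1) || (i == j.+1) -> i != m ->
         e i * e i * e j - (q + q^-1) *: (e i * e j * e i) + e j * e i * e i = 0 /\
         f i * f i * f j - (q + q^-1) *: (f i * f j * f i) + f j * f i * f i = 0) /\
      ((2 <= m)%N -> (2 <= n)%N ->
         scomm true true (Eij m.-1 m.+2) (e m) = 0 /\
         scomm true true (Fij m.-1 m.+2) (f m) = 0).

End Uq.

(* First the case of a shared first index,
   [E_sj, F_st] = (q_j^-1 - q_j) / (q_s - q_s^-1) K_s K_j^-1 F_jt and its mirror [E_st, F_sj],
   by induction on j - s: writing E_sj = e_s E_(s+1)j - q_(s+1)^-1 E_(s+1)j e_s and
   F_st = F_(s+1)t f_s - q_(s+1) f_s F_(s+1)t, the bracket is assembled from [e_s, f_s], which is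
   proportional to K_s K_(s+1)^-1 - K_s^-1 K_(s+1), and from the bracket of the shorter root
   vectors; every other pair of factors commutes or q-commutes, because root vectors are weight
   vectors for all K_k.  Then induction on s - i: e_i commutes with F_st (and f_i with E_st), so
   the bracket passes inside the outer q-commutator of E_ij (resp. F_ij); for i + 1 = s what
   remains is the q-commutator of e_i with K_s K_j^-1 F_jt. *)

From HB Require Import structures.
From mathcomp Require Import all_boot all_order all_algebra fraction.
From mathcomp Require Import ring zify.
Set Implicit Arguments. Unset Strict Implicit. Unset Printing Implicit Defensive.
Import Order.TTheory GRing.Theory Num.Theory.
Local Open Scope ring_scope.

Section LinearNormalForm.
Variables (R : pzRingType) (V : lmodType R).

Inductive lterm :=
  | LAtom of nat | LZero | LAdd of lterm & lterm | LOpp of lterm | LScale of R & lterm.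

Fixpoint leval (env : seq V) (t : lterm) : V :=
  match t with
  | LAtom k => env`_k
  | LZero => 0
  | LAdd t1 t2 => leval env t1 + leval env t2
  | LOpp t1 => - leval env t1
  | LScale c t1 => c *: leval env t1
  end.

Fixpoint lcoef (t : lterm) (k : nat) : R :=
  match t with
  | LAtom l => if Nat.eqb l k then 1 else 0
  | LZero => 0
  | LAdd t1 t2 => lcoef t1 k + lcoef t2 k
  | LOpp t1 => - lcoef t1 k
  | LScale c t1 => c * lcoef t1 k
  end.

Lemma leval_lcoef env t : leval env t = \sum_(k < size env) lcoef t k *: env`_k.
Proof.
elim: t => [l||t1 IH1 t2 IH2|t1 IH1|c t1 IH1] /=.
- case: (ltnP l (size env)) => hl; last first.
    rewrite nth_default // big1 // => k _.
    case: PeanoNat.Nat.eqb_spec => [el|_]; last by rewrite scale0r.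
    by move: (ltn_ord k); rewrite -el ltnNge hl.
  rewrite (bigD1 (Ordinal hl)) //= PeanoNat.Nat.eqb_refl scale1r big1 ?addr0 // => k /eqP nkl.
  case: PeanoNat.Nat.eqb_spec => [el|_]; last by rewrite scale0r.
  by case: nkl; apply: val_inj.
- by rewrite big1 // => k _; rewrite scale0r.
- by rewrite IH1 IH2 -big_split; apply: eq_bigr => k _; rewrite scalerDl.
- by rewrite IH1 -sumrN; apply: eq_bigr => k _; rewrite scaleNr.
- by rewrite IH1 scaler_sumr; apply: eq_bigr => k _; rewrite scalerA.
Qed.

(* A conjunction of [P 0], ..., [P k.-1] that [cbn] unfolds to separate goals. *)
Fixpoint all_below (k : nat) (P : nat -> Prop) : Prop :=
  if k is k'.+1 then all_below k' P /\ P k' else True.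

Lemma all_belowP k P : all_below k P -> forall i, (i < k)%N -> P i.
Proof.
elim: k => [//|k IH] /= [hk hPk] i; rewrite ltnS leq_eqVlt => /orP [/eqP -> //|].
exact: IH.
Qed.

Lemma leval_eq env t1 t2 :
  all_below (size env) (fun k => lcoef t1 k = lcoef t2 k) -> leval env t1 = leval env t2.
Proof.
by move/all_belowP=> h; rewrite !leval_lcoef; apply: eq_bigr => k _; rewrite h.
Qed.

End LinearNormalForm.
Arguments leval {R V}.

Ltac lterm_index x env :=
  lazymatch env with
  | nil => constr:((0%nat, cons x nil))
  | cons ?a ?r =>
    match goal with
    | _ => let _ := match goal with _ => unify a x end in constr:((0%nat, env))
    | _ => let p := lterm_index x r in
           lazymatch p with (?k, ?r') => constr:((S k, cons a r')) end
    end
  end.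

Ltac reify_lterm R t env :=
  lazymatch t with
  | (?a + ?b)%R =>
    let p1 := reify_lterm R a env in lazymatch p1 with (?t1, ?env1) =>
    let p2 := reify_lterm R b env1 in lazymatch p2 with (?t2, ?env2) =>
    constr:((@LAdd R t1 t2, env2)) end end
  | (- ?a)%R =>
    let p := reify_lterm R a env in lazymatch p with (?t1, ?env1) =>
    constr:((@LOpp R t1, env1)) end
  | (?c *: ?a)%R =>
    let p := reify_lterm R a env in lazymatch p with (?t1, ?env1) =>
    constr:((@LScale R c t1, env1)) end
  | 0%R => constr:((@LZero R, env))
  | _ => let p := lterm_index t env in lazymatch p with (?k, ?env1) =>
         constr:((@LAtom R k, env1)) end
  end.

(* Reduces an equation between R-linear combinations of (syntactically
   distinct) atoms to the equality of their coefficients. *)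
Ltac lincomb R :=
  lazymatch goal with |- @eq ?T ?l ?r =>
    let p1 := reify_lterm R l (@nil T) in lazymatch p1 with (?t1, ?env1) =>
    let p2 := reify_lterm R r env1 in lazymatch p2 with (?t2, ?env2) =>
    change (leval env2 t1 = leval env2 t2); apply: leval_eq;
    cbn [all_below size lcoef Nat.eqb]
    end end end.

Ltac expand_products :=
  repeat progress rewrite ?(mulrDl, mulrDr, mulrBl, mulrBr, mulNr, mulrN, scalerDr,
    scalerBr, scalerN, scalerA, mulrA) -?scalerAl -?scalerAr.

Lemma mulr_prefix (R : pzRingType) (x y z : R) : x * y = z -> forall w, w * x * y = w * z.
Proof. by move=> h w; rewrite -mulrA h. Qed.

(* Rewrites monomials with the equations [a * b = _] in the context, also inside
   longer (left-associated) monomials, until none applies. *)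
Ltac reorder_step :=
  match goal with
  | H : ?a * ?b = _ |- context [?a * ?b] => rewrite H
  | H : ?a * ?b = _ |- context [?w * ?a * ?b] => rewrite (mulr_prefix H w)
  end.
Ltac reorder := expand_products; repeat (progress (repeat reorder_step); expand_products).

Lemma commr_inverse (R : pzRingType) (u v w : R) :
  u * v = 1 -> v * u = 1 -> GRing.comm u w -> GRing.comm v w.
Proof.
move=> uv vu uw; rewrite /GRing.comm -[v * w]mulr1 -uv.
by rewrite mulrA -[v * w * u]mulrA -uw !mulrA vu mul1r.
Qed.

Lemma divf_mulK (F : fieldType) (a b d : F) : a != 0 -> a / d * b / a = b / d.
Proof. by move=> a0; rewrite mulrAC -[a / d * _]mulrA mulrCA mulfV // mulr1 mulrC. Qed.

Lemma ltn_ind_left (P : nat -> nat -> Prop) :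
  (forall a, P a a.+1) -> (forall a b, (a.+1 < b)%N -> P a.+1 b -> P a b) ->
  forall a b, (a < b)%N -> P a b.
Proof.
move=> base step a b hab; have [d ->] : exists d, b = (a + d.+1)%N.
  by exists (b - a.+1)%N; lia.
elim: d a {b hab} => [|d IH] a; first by rewrite addn1.
by rewrite -addSnnS; apply: step; [lia | exact: IH].
Qed.

Section QCommutator.
Variables (F : fieldType) (A : algType F).
Implicit Types (a b c d q : F) (x y z w e f h u v : A).

Definition qcomm a x y := x * y - a *: (y * x).

Definition skewcomm c x y := x * y = c *: (y * x).

Lemma signr_cases (b : bool) : (-1) ^+ b = 1 :> F \/ (-1) ^+ b = -1 :> F.
Proof. by case: b; [right|left]. Qed.

Lemma mulr_qcommE a x y : x * y = a *: (y * x) + qcomm a x y.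
Proof. by rewrite /qcomm addrC subrK. Qed.

Lemma scommE (a b : bool) x y :
  scomm a b x y = qcomm ((-1) ^+ (a && b)) x y.
Proof. by rewrite /scomm /qcomm; case: (a && b); rewrite ?scaleN1r ?mulN1r ?scale1r ?mul1r. Qed.

Lemma skewcomm1 x y : skewcomm 1 x y <-> GRing.comm x y.
Proof. by rewrite /skewcomm scale1r. Qed.

Lemma qcommZr a c x y : qcomm a x (c *: y) = c *: qcomm a x y.
Proof. by rewrite /qcomm -scalerAr -scalerAl scalerBr scalerA mulrC -scalerA. Qed.

Lemma qcommZl a c x y : qcomm a (c *: x) y = c *: qcomm a x y.
Proof. by rewrite /qcomm -scalerAr -scalerAl scalerBr scalerA mulrC -scalerA. Qed.

Lemma qcomm_skew a b x y : skewcomm b x y -> qcomm a x y = (b - a) *: (y * x).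
Proof. by rewrite /qcomm => ->; rewrite scalerBl. Qed.

Lemma qcomm_mulr a x y z : GRing.comm x z -> qcomm a x (z * y) = z * qcomm a x y.
Proof. by move=> hxz; rewrite /qcomm mulrBr -scalerAr !mulrA hxz. Qed.

Lemma qcomm_mull a x y z : GRing.comm z y -> qcomm a (x * z) y = qcomm a x y * z.
Proof. by move=> hzy; rewrite /qcomm mulrBl -scalerAl -!mulrA hzy. Qed.

Lemma commrZ c x y : GRing.comm x y -> GRing.comm x (c *: y).
Proof. by rewrite /GRing.comm -scalerAr -scalerAl => ->. Qed.

Lemma commr_qcomm a x y z : GRing.comm x y -> GRing.comm x z -> GRing.comm x (qcomm a y z).
Proof. by move=> hy hz; apply: commrB; [|apply: commrZ]; apply: commrM. Qed.

Lemma skewcommZl a c h x : skewcomm c h x -> skewcomm c (a *: h) x.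
Proof. by rewrite /skewcomm -scalerAl -scalerAr => ->; rewrite !scalerA mulrC. Qed.

Lemma skewcomm_mull c1 c2 h1 h2 x :
  skewcomm c1 h1 x -> skewcomm c2 h2 x -> skewcomm (c1 * c2) (h1 * h2) x.
Proof.
rewrite /skewcomm => h1x h2x.
by rewrite -mulrA h2x -scalerAr [h1 * (x * _)]mulrA h1x -scalerAl scalerA mulrC -mulrA.
Qed.

Lemma skewcomm_mulr c1 c2 h x y :
  skewcomm c1 h x -> skewcomm c2 h y -> skewcomm (c1 * c2) h (x * y).
Proof.
rewrite /skewcomm => hx hy.
by rewrite mulrA hx -scalerAl -[x * h * y]mulrA hy -scalerAr scalerA mulrA.
Qed.

Lemma skewcomm_qcomm c1 c2 a h x y :
  skewcomm c1 h x -> skewcomm c2 h y -> skewcomm (c1 * c2) h (qcomm a x y).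
Proof.
move=> hx hy; have hxy := skewcomm_mulr hx hy; have hyx := skewcomm_mulr hy hx.
rewrite /skewcomm /qcomm in hxy hyx *.
by rewrite mulrBr mulrBl -scalerAr -scalerAl hxy hyx scalerBr !scalerA [c2 * c1]mulrC (mulrC a).
Qed.

Lemma skewcommV c x y :
  c != 0 -> skewcomm c x y -> skewcomm c^-1 y x.
Proof. by rewrite /skewcomm => c0 ->; rewrite scalerA mulVf ?scale1r. Qed.

Lemma skewcomm_inverse c u v x :
  u * v = 1 -> v * u = 1 -> c != 0 -> skewcomm c u x -> skewcomm c^-1 v x.
Proof.
rewrite /skewcomm => uv vu c0 ux.
have xu : x * u = c^-1 *: (u * x) by rewrite ux scalerA mulVf ?scale1r.
rewrite -[v * x]mulr1 -uv mulrA -[v * x * u]mulrA xu -scalerAr -scalerAl.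
by rewrite mulrA vu mul1r.
Qed.

Lemma qcomm_nest_l a c e x w : GRing.comm e w ->
  qcomm c (qcomm a e x) w = qcomm a e (qcomm c x w).
Proof.
rewrite /GRing.comm /qcomm => hew.
by reorder; lincomb F; repeat split; ring.
Qed.

Lemma qcomm_nest_r a c f y v : GRing.comm f v ->
  qcomm c v (qcomm a y f) = qcomm a (qcomm c v y) f.
Proof.
rewrite /GRing.comm /qcomm => /esym hvf.
by reorder; lincomb F; repeat split; ring.
Qed.

(* For e, f = e_s, f_s, root vectors x, y starting at s + 1, P, P' = K_s K_(s+1)^-1, K_s^-1 K_(s+1),
   q = q_(s+1) and d = q_s - q_s^-1: the inductive steps for brackets of root vectors with a
   shared first index. *)
Section RootBrackets.
Variables (b1 : bool) (q d : F) (e f x y P P' : A).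
Hypotheses (q0 : q != 0) (d0 : d != 0).
Hypotheses (hey : GRing.comm e y) (hxf : GRing.comm x f).
Hypothesis hef : qcomm ((-1) ^+ b1) e f = d^-1 *: (P - P').
Hypotheses (hPx : skewcomm q^-1 P x) (hP'x : skewcomm q P' x).
Hypotheses (hPy : skewcomm q P y) (hP'y : skewcomm q^-1 P' y).

Let mul_ef := etrans (mulr_qcommE ((-1) ^+ b1) e f) (congr1 _ hef).

Lemma root_bracket_base_l :
  qcomm ((-1) ^+ b1) e (qcomm q y f) = ((q^-1 - q) / d) *: (P * y).
Proof.
move: hey hPy hP'y mul_ef; rewrite /GRing.comm /skewcomm /qcomm => *.
by reorder; lincomb F; repeat split; field; rewrite ?q0 ?d0.
Qed.

Lemma root_bracket_base_r :
  qcomm ((-1) ^+ b1) (qcomm q^-1 e x) f = ((q^-1 - q) / d) *: (x * P').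
Proof.
move: hxf hPx hP'x mul_ef; rewrite /GRing.comm /skewcomm /qcomm => *.
by reorder; lincomb F; repeat split; field; rewrite ?q0 ?d0.
Qed.

Variables (b2 : bool) (Z : A).
Hypothesis hxy : qcomm ((-1) ^+ b2) x y = Z.
Hypotheses (hPZ : GRing.comm P Z) (hP'Z : GRing.comm P' Z).

Let mul_xy := etrans (mulr_qcommE ((-1) ^+ b2) x y) (congr1 _ hxy).

Lemma root_bracket_step_l : skewcomm q^-1 Z e -> skewcomm q Z f ->
  qcomm ((-1) ^+ (b1 (+) b2)) (qcomm q^-1 e x) (qcomm q y f) = ((q - q^-1) / d) *: (Z * P).
Proof.
move: hey hxf hPx hP'x hPy hP'y hPZ hP'Z mul_ef mul_xy.
rewrite signr_addb /GRing.comm /skewcomm /qcomm => *; reorder; lincomb F.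
by case: (signr_cases b1) => ->; case: (signr_cases b2) => ->; repeat split; field;
  rewrite ?q0 ?d0.
Qed.

Lemma root_bracket_step_r : skewcomm q Z e -> skewcomm q^-1 Z f ->
  qcomm ((-1) ^+ (b1 (+) b2)) (qcomm q^-1 e x) (qcomm q y f) = ((q - q^-1) / d) *: (Z * P').
Proof.
move: hey hxf hPx hP'x hPy hP'y hPZ hP'Z mul_ef mul_xy.
rewrite signr_addb /GRing.comm /skewcomm /qcomm => *; reorder; lincomb F.
by case: (signr_cases b1) => ->; case: (signr_cases b2) => ->; repeat split; field;
  rewrite ?q0 ?d0.
Qed.

End RootBrackets.
End QCommutator.

Section RootVectors.
Variables (C : numClosedFieldType) (m n : nat) (A : algType (Cq C)) (K Kinv e f : nat -> A).
Hypothesis hrel : Uq_relations (qind C) m n e f K Kinv.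

Local Notation q := (qind C).
Local Notation Q := (qi q m).
Local Notation E := (Eij q m e).
Local Notation F := (Fij q m f).

Lemma q_neq0 : q != 0.
Proof. by rewrite /qind -(@tofrac0 {poly C}) tofrac_eq polyX_eq0. Qed.

Lemma q_sqr_neq1 : q * q != 1.
Proof.
rewrite /qind -(@tofracM {poly C}) -(@tofrac1 {poly C}) tofrac_eq -expr2.
by apply/eqP => /(congr1 (fun p : {poly C} => size p)); rewrite size_polyXn size_poly1.
Qed.

Lemma Q_neq0 k : Q k != 0.
Proof. by rewrite /qi; case: ifP => _; rewrite ?invr_eq0 q_neq0. Qed.

Lemma Q_subV_neq0 k : Q k - (Q k)^-1 != 0.
Proof.
rewrite subr_eq0; apply: contraNneq q_sqr_neq1 => hQ.
have QQ : Q k * Q k = 1 by rewrite {2}hQ mulfV ?Q_neq0.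
move: QQ; rewrite /qi; case: ifP => _ => [/eqP|]; rewrite // -invfM => /(canRL invrK).
by rewrite invr1 => ->.
Qed.

Lemma mulKKinv k : (1 <= k <= m + n)%N -> K k * Kinv k = 1.
Proof. by case: hrel => _ [h _] hk; case: (h k hk). Qed.

Lemma mulKinvK k : (1 <= k <= m + n)%N -> Kinv k * K k = 1.
Proof. by case: hrel => _ [h _] hk; case: (h k hk). Qed.

Lemma comm_K_K k l : (1 <= k <= m + n)%N -> (1 <= l <= m + n)%N -> GRing.comm (K k) (K l).
Proof. by case: hrel => h _; apply: h. Qed.

Lemma comm_Kinv_K k l :
  (1 <= k <= m + n)%N -> (1 <= l <= m + n)%N -> GRing.comm (Kinv k) (K l).
Proof. by move=> hk hl; apply: (commr_inverse (mulKKinv hk) (mulKinvK hk)); apply: comm_K_K. Qed.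

Lemma comm_Kinv_Kinv k l :
  (1 <= k <= m + n)%N -> (1 <= l <= m + n)%N -> GRing.comm (Kinv k) (Kinv l).
Proof.
move=> hk hl; apply: (commr_inverse (mulKKinv hk) (mulKinvK hk)).
by apply/commr_sym/comm_Kinv_K.
Qed.

Lemma conj_K_e k l : (1 <= k <= m + n)%N -> (1 <= l < m + n)%N ->
  K k * e l * Kinv k = Q k ^ dexp k l *: e l.
Proof. by case: hrel => _ [_ [h _]] hk hl; case: (h k l hk hl). Qed.

Lemma conj_K_f k l : (1 <= k <= m + n)%N -> (1 <= l < m + n)%N ->
  K k * f l * Kinv k = Q k ^ (- dexp k l) *: f l.
Proof. by case: hrel => _ [_ [h _]] hk hl; case: (h k l hk hl). Qed.

Lemma qcomm_e_f i : (1 <= i < m + n)%N ->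
  qcomm ((-1) ^+ (i == m)) (e i) (f i) =
    (Q i - (Q i)^-1)^-1 *: (K i * Kinv i.+1 - Kinv i * K i.+1).
Proof.
by case: hrel => _ [_ [_ [h _]]] hi; move: (h i i hi hi); rewrite eqxx scommE andbb.
Qed.

Lemma comm_e_f i j : (1 <= i < m + n)%N -> (1 <= j < m + n)%N -> i != j ->
  GRing.comm (e i) (f j).
Proof.
case: hrel => _ [_ [_ [h _]]] hi hj nij; move: (h i j hi hj); rewrite (negbTE nij) scommE.
have -> : (i == m) && (j == m) = false by apply: contraNF nij => /andP [/eqP -> /eqP ->].
by rewrite /qcomm expr0 scale1r => /subr0_eq.
Qed.

Lemma comm_e_e i j : (1 <= i < m + n)%N -> (1 <= j < m + n)%N ->
  (i.+1 < j)%N || (j.+1 < i)%N -> GRing.comm (e i) (e j).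
Proof. by case: hrel => _ [_ [_ [_ [_ [_ [h _]]]]]] hi hj hij; case: (h i j hi hj hij). Qed.

Lemma comm_f_f i j : (1 <= i < m + n)%N -> (1 <= j < m + n)%N ->
  (i.+1 < j)%N || (j.+1 < i)%N -> GRing.comm (f i) (f j).
Proof. by case: hrel => _ [_ [_ [_ [_ [_ [h _]]]]]] hi hj hij; case: (h i j hi hj hij). Qed.

Definition Kweight k (X : A) (c : Cq C) := skewcomm c (K k) X /\ skewcomm c^-1 (Kinv k) X.

Lemma Kweight_conj k X c : (1 <= k <= m + n)%N -> c != 0 ->
  K k * X * Kinv k = c *: X -> Kweight k X c.
Proof.
move=> hk c0 hX; have KX : skewcomm c (K k) X.
  by rewrite /skewcomm scalerAl -hX -[_ * Kinv k * K k]mulrA mulKinvK ?mulr1.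
by split=> //; apply: skewcomm_inverse KX; rewrite ?mulKKinv ?mulKinvK.
Qed.

Lemma Kweight_mul k X Y c1 c2 :
  Kweight k X c1 -> Kweight k Y c2 -> Kweight k (X * Y) (c1 * c2).
Proof. by move=> [hX hX'] [hY hY']; split; rewrite ?invfM; apply: skewcomm_mulr. Qed.

Lemma Kweight_qcomm k a X Y c1 c2 :
  Kweight k X c1 -> Kweight k Y c2 -> Kweight k (qcomm a X Y) (c1 * c2).
Proof. by move=> [hX hX'] [hY hY']; split; rewrite ?invfM; apply: skewcomm_qcomm. Qed.

Lemma Kweight_K k l : (1 <= k <= m + n)%N -> (1 <= l <= m + n)%N -> Kweight k (K l) 1.
Proof.
by move=> hk hl; rewrite /Kweight invr1; split; apply/skewcomm1;
  [apply: comm_K_K | apply: comm_Kinv_K].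
Qed.

Lemma Kweight_Kinv k l : (1 <= k <= m + n)%N -> (1 <= l <= m + n)%N -> Kweight k (Kinv l) 1.
Proof.
move=> hk hl; rewrite /Kweight invr1; split; apply/skewcomm1; last exact: comm_Kinv_Kinv.
by apply/commr_sym/comm_Kinv_K.
Qed.

Lemma Kweight_ratio k1 k2 X c1 c2 : Kweight k1 X c1 -> Kweight k2 X c2 ->
  skewcomm (c1 / c2) (K k1 * Kinv k2) X /\ skewcomm (c2 / c1) (Kinv k1 * K k2) X.
Proof. by move=> [h1 h1'] [h2 h2']; split; [|rewrite mulrC]; apply: skewcomm_mull. Qed.

Definition Eweight k a b : Cq C := if k == a then Q k else if k == b then (Q k)^-1 else 1.

Lemma Eweight_l a b : (a < b)%N -> Eweight a a b = Q a.
Proof. by rewrite /Eweight eqxx. Qed.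

Lemma Eweight_r a b : (a < b)%N -> Eweight b a b = (Q b)^-1.
Proof. by move=> ab; rewrite /Eweight eqxx ifN //; lia. Qed.

Lemma Eweight_out k a b : k != a -> k != b -> Eweight k a b = 1.
Proof. by move=> ka kb; rewrite /Eweight (negbTE ka) (negbTE kb). Qed.

Lemma Eweight_neq0 k a b : Eweight k a b != 0.
Proof.
by rewrite /Eweight; case: ifP => _; [|case: ifP => _]; rewrite ?invr_eq0 ?Q_neq0 ?oner_eq0.
Qed.

Lemma Eweight_split k a c b : (a < c < b)%N -> Eweight k a c * Eweight k c b = Eweight k a b.
Proof.
rewrite /Eweight => hacb.
by repeat case: eqP => ? //; subst; rewrite ?mulr1 ?mul1r ?mulVf ?Q_neq0 //; lia.
Qed.

Lemma expr_dexp k l : Q k ^ dexp k l = Eweight k l l.+1.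
Proof.
rewrite /dexp /Eweight; have [->|_] := eqVneq k l.
  by rewrite (_ : (l == l.+1) = false) ?subr0 ?expr1z //; lia.
by case: eqP => _ /=; rewrite ?sub0r ?exprN1 ?subr0 ?expr0z.
Qed.

Lemma Eij_base a : E a a.+1 = e a.
Proof. by rewrite /Eij subSnn. Qed.

Lemma Fij_base a : F a a.+1 = f a.
Proof. by rewrite /Fij subSnn. Qed.

Lemma Eij_rec a b : (a.+1 < b)%N -> E a b = qcomm (Q a.+1)^-1 (e a) (E a.+1 b).
Proof. by move=> ab; rewrite /Eij (_ : (b - a - 1 = (b - a.+1 - 1).+1)%N) //; lia. Qed.

Lemma Fij_rec a b : (a.+1 < b)%N -> F a b = qcomm (Q a.+1) (F a.+1 b) (f a).
Proof.
move=> ab; rewrite /Fij (_ : (b - a - 1 = (b - a.+1 - 1).+1)%N) /=; last by lia.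
by rewrite /qcomm addrC.
Qed.

Lemma Kweight_e k l : (1 <= k <= m + n)%N -> (1 <= l < m + n)%N ->
  Kweight k (e l) (Eweight k l l.+1).
Proof. by move=> hk hl; apply: Kweight_conj; rewrite ?Eweight_neq0 -?expr_dexp ?conj_K_e. Qed.

Lemma Kweight_f k l : (1 <= k <= m + n)%N -> (1 <= l < m + n)%N ->
  Kweight k (f l) (Eweight k l l.+1)^-1.
Proof.
move=> hk hl.
by apply: Kweight_conj; rewrite ?invr_eq0 ?Eweight_neq0 -?expr_dexp ?invr_expz ?conj_K_f.
Qed.

Lemma Kweight_e_out k l : (1 <= k <= m + n)%N -> (1 <= l < m + n)%N ->
  k != l -> k != l.+1 -> Kweight k (e l) 1.
Proof. by move=> hk hl kl kl1; rewrite -(@Eweight_out k l l.+1) //; apply: Kweight_e. Qed.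

Lemma Kweight_f_out k l : (1 <= k <= m + n)%N -> (1 <= l < m + n)%N ->
  k != l -> k != l.+1 -> Kweight k (f l) 1.
Proof. by move=> hk hl kl kl1; rewrite -invr1 -(@Eweight_out k l l.+1) //; apply: Kweight_f. Qed.

Lemma Kweight_E k a b : (1 <= k <= m + n)%N -> (1 <= a)%N -> (a < b)%N -> (b <= m + n)%N ->
  Kweight k (E a b) (Eweight k a b).
Proof.
move=> hk + hab; elim/ltn_ind_left: a b / hab => [a|a b ab IH] ha hb.
  by rewrite Eij_base; apply: Kweight_e; lia.
rewrite Eij_rec // -(@Eweight_split k a a.+1 b); last by lia.
by apply: Kweight_qcomm; [apply: Kweight_e | apply: IH]; lia.
Qed.

Lemma Kweight_F k a b : (1 <= k <= m + n)%N -> (1 <= a)%N -> (a < b)%N -> (b <= m + n)%N ->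
  Kweight k (F a b) (Eweight k a b)^-1.
Proof.
move=> hk + hab; elim/ltn_ind_left: a b / hab => [a|a b ab IH] ha hb.
  by rewrite Fij_base; apply: Kweight_f; lia.
rewrite Fij_rec // -(@Eweight_split k a a.+1 b) ?invfM 1?mulrC; last by lia.
by apply: Kweight_qcomm; [apply: IH | apply: Kweight_f]; lia.
Qed.

Lemma comm_e_F k a b : (1 <= k < m + n)%N -> (1 <= a)%N -> (a < b)%N -> (b <= m + n)%N ->
  (k < a)%N || (b <= k)%N -> GRing.comm (e k) (F a b).
Proof.
move=> hk + hab; elim/ltn_ind_left: a b / hab => [a|a b ab IH] ha hb hkab.
  by rewrite Fij_base; apply: comm_e_f; lia.
by rewrite Fij_rec //; apply: commr_qcomm; [apply: IH | apply: comm_e_f]; lia.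
Qed.

Lemma comm_f_E k a b : (1 <= k < m + n)%N -> (1 <= a)%N -> (a < b)%N -> (b <= m + n)%N ->
  (k < a)%N || (b <= k)%N -> GRing.comm (f k) (E a b).
Proof.
move=> hk + hab; elim/ltn_ind_left: a b / hab => [a|a b ab IH] ha hb hkab.
  by rewrite Eij_base; apply/commr_sym/comm_e_f; lia.
rewrite Eij_rec //; apply: commr_qcomm; last by apply: IH; lia.
by apply/commr_sym/comm_e_f; lia.
Qed.

Lemma comm_e_E k a b : (1 <= k < m + n)%N -> (1 <= a)%N -> (a < b)%N -> (b <= m + n)%N ->
  (k.+1 < a)%N || (b < k)%N -> GRing.comm (e k) (E a b).
Proof.
move=> hk + hab; elim/ltn_ind_left: a b / hab => [a|a b ab IH] ha hb hkab.
  by rewrite Eij_base; apply: comm_e_e; lia.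
by rewrite Eij_rec //; apply: commr_qcomm; [apply: comm_e_e | apply: IH]; lia.
Qed.

Lemma comm_f_F k a b : (1 <= k < m + n)%N -> (1 <= a)%N -> (a < b)%N -> (b <= m + n)%N ->
  (k.+1 < a)%N || (b < k)%N -> GRing.comm (f k) (F a b).
Proof.
move=> hk + hab; elim/ltn_ind_left: a b / hab => [a|a b ab IH] ha hb hkab.
  by rewrite Fij_base; apply: comm_f_f; lia.
by rewrite Fij_rec //; apply: commr_qcomm; [apply: IH | apply: comm_f_f]; lia.
Qed.

Lemma Kweight_KKinv_mull k a b X c : (1 <= k <= m + n)%N -> (1 <= a <= m + n)%N ->
  (1 <= b <= m + n)%N -> Kweight k X c -> Kweight k (K a * Kinv b * X) c.
Proof.
move=> hk ha hb hX; rewrite -[c]mul1r -[1]mul1r.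
by apply: Kweight_mul => //; apply: Kweight_mul; [apply: Kweight_K | apply: Kweight_Kinv].
Qed.

Lemma Kweight_KinvK_mulr k a b X c : (1 <= k <= m + n)%N -> (1 <= a <= m + n)%N ->
  (1 <= b <= m + n)%N -> Kweight k X c -> Kweight k (X * Kinv a * K b) c.
Proof.
move=> hk ha hb hX; rewrite -[c]mulr1 -[c]mulr1.
by apply: Kweight_mul; [apply: Kweight_mul => //; apply: Kweight_Kinv | apply: Kweight_K].
Qed.

Lemma skewcomm_KKinv_mull k1 k2 W X c1 c2 :
  Kweight k1 X c1 -> Kweight k2 X c2 -> GRing.comm W X ->
  skewcomm (c1 / c2) (K k1 * Kinv k2 * W) X.
Proof.
move=> h1 h2 /skewcomm1 hW; rewrite -[c1 / c2]mulr1.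
by apply: skewcomm_mull hW; case: (Kweight_ratio h1 h2).
Qed.

Lemma skewcomm_KinvK_mulr k1 k2 W X c1 c2 :
  Kweight k1 X c1 -> Kweight k2 X c2 -> GRing.comm W X ->
  skewcomm (c2 / c1) (W * Kinv k1 * K k2) X.
Proof.
move=> h1 h2 /skewcomm1 hW; rewrite -mulrA -[c2 / c1]mul1r.
by apply: skewcomm_mull hW _; case: (Kweight_ratio h1 h2).
Qed.

Lemma cartan_skew_E s b : (1 <= s)%N -> (s.+1 < b)%N -> (b <= m + n)%N ->
  skewcomm (Q s.+1)^-1 (K s * Kinv s.+1) (E s.+1 b) /\
  skewcomm (Q s.+1) (Kinv s * K s.+1) (E s.+1 b).
Proof.
move=> hs sb hb; have [] := Kweight_ratio (@Kweight_E s s.+1 b ltac:(lia) ltac:(lia) sb hb)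
  (@Kweight_E s.+1 s.+1 b ltac:(lia) ltac:(lia) sb hb).
by rewrite Eweight_l // Eweight_out ?div1r ?divr1 //; lia.
Qed.

Lemma cartan_skew_F s b : (1 <= s)%N -> (s.+1 < b)%N -> (b <= m + n)%N ->
  skewcomm (Q s.+1) (K s * Kinv s.+1) (F s.+1 b) /\
  skewcomm (Q s.+1)^-1 (Kinv s * K s.+1) (F s.+1 b).
Proof.
move=> hs sb hb; have [] := Kweight_ratio (@Kweight_F s s.+1 b ltac:(lia) ltac:(lia) sb hb)
  (@Kweight_F s.+1 s.+1 b ltac:(lia) ltac:(lia) sb hb).
by rewrite Eweight_l // Eweight_out ?invr1 ?div1r ?mulr1 ?invrK //; lia.
Qed.

Lemma cartan_comm s X : Kweight s X 1 -> Kweight s.+1 X 1 ->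
  GRing.comm (K s * Kinv s.+1) X /\ GRing.comm (Kinv s * K s.+1) X.
Proof.
by move=> h1 h2; have [] := Kweight_ratio h1 h2; rewrite divr1 => /skewcomm1 ? /skewcomm1.
Qed.

Lemma bracket_Esj_Fst s j t : (1 <= s)%N -> (s < j)%N -> (j < t)%N -> (t <= m + n)%N ->
  qcomm ((-1) ^+ (par m s j && par m s t)) (E s j) (F s t) =
    (((Q j)^-1 - Q j) / (Q s - (Q s)^-1)) *: (K s * Kinv j * F j t).
Proof.
move=> + hsj; elim/ltn_ind_left: s j / hsj => [s|s j sj IH] hs hjt ht.
  have [hPy hP'y] := cartan_skew_F hs hjt ht.
  rewrite Eij_base Fij_rec // (_ : _ && _ = (s == m)); last by rewrite /par; lia.
  apply: root_bracket_base_l hPy hP'y;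
    rewrite ?Q_neq0 ?Q_subV_neq0 ?qcomm_e_f //; try lia.
  by apply: comm_e_F; lia.
have [hPx hP'x] := cartan_skew_E hs sj (ltnW (leq_trans hjt ht)).
have [hPy hP'y] := cartan_skew_F hs (ltn_trans sj hjt) ht.
set W := K s.+1 * Kinv j * F j t.
have hW k : (1 <= k <= s.+1)%N -> Kweight k W 1.
  move=> hk; rewrite -invr1 -(@Eweight_out k j t); try lia.
  by apply: Kweight_KKinv_mull; [lia | lia | lia | apply: Kweight_F; lia].
have [hPW hP'W] := cartan_comm (hW s ltac:(lia)) (hW s.+1 ltac:(lia)).
have hFe : GRing.comm (F j t) (e s) by apply/commr_sym/comm_e_F; lia.
have hWe : skewcomm (Q s.+1)^-1 W (e s).
  have := skewcomm_KKinv_mull (@Kweight_e s.+1 s ltac:(lia) ltac:(lia))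
    (@Kweight_e_out j s ltac:(lia) ltac:(lia) ltac:(lia) ltac:(lia)) hFe.
  by rewrite Eweight_r // divr1.
have hFf : GRing.comm (F j t) (f s) by apply/commr_sym/comm_f_F; lia.
have hWf : skewcomm (Q s.+1) W (f s).
  have := skewcomm_KKinv_mull (@Kweight_f s.+1 s ltac:(lia) ltac:(lia))
    (@Kweight_f_out j s ltac:(lia) ltac:(lia) ltac:(lia) ltac:(lia)) hFf.
  by rewrite Eweight_r // invrK divr1.
rewrite Eij_rec // Fij_rec; last by lia.
rewrite (_ : _ && _ = (s == m) (+) (par m s.+1 j && par m s.+1 t)); last by rewrite /par; lia.
rewrite (root_bracket_step_l _ _ _ _ (qcomm_e_f _) hPx hP'x hPy hP'y (IH isT hjt ht)
  (commrZ _ hPW) (commrZ _ hP'W) (skewcommZl _ hWe) (skewcommZl _ hWf)).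
- rewrite -[_ *: _ * _]scalerAl scalerA -hPW !mulrA -[K s * Kinv s.+1 * K s.+1]mulrA.
  rewrite mulKinvK ?mulr1; last by lia.
  by rewrite divf_mulK ?Q_subV_neq0.
- exact: Q_neq0.
- exact: Q_subV_neq0.
- by apply: comm_e_F; lia.
- by apply/commr_sym/comm_f_E; lia.
- by lia.
Qed.

Lemma mulKinvK_cancel a b c : (1 <= a <= m + n)%N -> (1 <= b <= m + n)%N ->
  (1 <= c <= m + n)%N -> Kinv a * K b * (Kinv c * K a) = Kinv c * K b.
Proof.
move=> ha hb hc; rewrite (comm_Kinv_K hc ha) !mulrA -[Kinv a * K b * K a]mulrA.
rewrite (comm_K_K hb ha) mulrA mulKinvK // mul1r.
by apply/esym/comm_Kinv_K.
Qed.

Lemma bracket_Est_Fsj s j t : (1 <= s)%N -> (s < j)%N -> (j < t)%N -> (t <= m + n)%N ->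
  qcomm ((-1) ^+ (par m s t && par m s j)) (E s t) (F s j) =
    (((Q j)^-1 - Q j) / (Q s - (Q s)^-1)) *: (E j t * Kinv s * K j).
Proof.
move=> + hsj; elim/ltn_ind_left: s j / hsj => [s|s j sj IH] hs hjt ht.
  have [hPx hP'x] := cartan_skew_E hs hjt ht.
  rewrite Fij_base Eij_rec // (_ : _ && _ = (s == m)); last by rewrite /par; lia.
  rewrite -mulrA; apply: root_bracket_base_r hPx hP'x;
    rewrite ?Q_neq0 ?Q_subV_neq0 ?qcomm_e_f //; try lia.
  by apply/commr_sym/comm_f_E; lia.
have [hPx hP'x] := cartan_skew_E hs (ltn_trans sj hjt) ht.
have [hPy hP'y] := cartan_skew_F hs sj (ltnW (leq_trans hjt ht)).
set W := E j t * Kinv s.+1 * K j.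
have hW k : (1 <= k <= s.+1)%N -> Kweight k W 1.
  move=> hk; rewrite -(@Eweight_out k j t); try lia.
  by apply: Kweight_KinvK_mulr; [lia | lia | lia | apply: Kweight_E; lia].
have [hPW hP'W] := cartan_comm (hW s ltac:(lia)) (hW s.+1 ltac:(lia)).
have hEe : GRing.comm (E j t) (e s) by apply/commr_sym/comm_e_E; lia.
have hWe : skewcomm (Q s.+1) W (e s).
  have := skewcomm_KinvK_mulr (@Kweight_e s.+1 s ltac:(lia) ltac:(lia))
    (@Kweight_e_out j s ltac:(lia) ltac:(lia) ltac:(lia) ltac:(lia)) hEe.
  by rewrite Eweight_r // div1r invrK.
have hEf : GRing.comm (E j t) (f s) by apply/commr_sym/comm_f_E; lia.
have hWf : skewcomm (Q s.+1)^-1 W (f s).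
  have := skewcomm_KinvK_mulr (@Kweight_f s.+1 s ltac:(lia) ltac:(lia))
    (@Kweight_f_out j s ltac:(lia) ltac:(lia) ltac:(lia) ltac:(lia)) hEf.
  by rewrite Eweight_r // invrK div1r.
rewrite Fij_rec // Eij_rec; last by lia.
rewrite (_ : _ && _ = (s == m) (+) (par m s.+1 t && par m s.+1 j)); last by rewrite /par; lia.
rewrite (root_bracket_step_r _ _ _ _ (qcomm_e_f _) hPx hP'x hPy hP'y (IH isT hjt ht)
  (commrZ _ hPW) (commrZ _ hP'W) (skewcommZl _ hWe) (skewcommZl _ hWf)).
- rewrite -[_ *: _ * _]scalerAl scalerA /W -[_ * Kinv s.+1 * K j]mulrA.
  rewrite -[E j t * (Kinv s.+1 * K j) * _]mulrA.
  by rewrite mulKinvK_cancel ?mulrA ?divf_mulK ?Q_subV_neq0 //; lia.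
- exact: Q_neq0.
- exact: Q_subV_neq0.
- by apply: comm_e_F; lia.
- by apply/commr_sym/comm_f_E; lia.
- by lia.
Qed.

Lemma bracket_Eij_Fst i s j t : (1 <= i)%N -> (i < s)%N -> (s < j)%N -> (j < t)%N ->
  (t <= m + n)%N ->
  qcomm ((-1) ^+ (par m i j && par m s t)) (E i j) (F s t) =
    ((Q j)^-1 - Q j) *: (K s * Kinv j * F j t * E i s).
Proof.
move=> + his; elim/ltn_ind_left: i s / his => [i|i s lt_is IH] hi hsj hjt ht.
  have heF : GRing.comm (e i) (F i.+1 t) by apply: comm_e_F; lia.
  have hFe : GRing.comm (F j t) (e i) by apply/commr_sym/comm_e_F; lia.
  have hWe : skewcomm (Q i.+1) (e i) (K i.+1 * Kinv j * F j t).
    have := skewcomm_KKinv_mull (@Kweight_e i.+1 i ltac:(lia) ltac:(lia))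
      (@Kweight_e_out j i ltac:(lia) ltac:(lia) ltac:(lia) ltac:(lia)) hFe.
    by rewrite Eweight_r // divr1 => /skewcommV; rewrite invrK invr_eq0 Q_neq0; apply.
  rewrite Eij_rec // (_ : _ && _ = par m i.+1 j && par m i.+1 t); last by rewrite /par; lia.
  rewrite qcomm_nest_l // bracket_Esj_Fst // qcommZr (qcomm_skew _ hWe) scalerA Eij_base.
  by rewrite divfK ?Q_subV_neq0.
have heF : GRing.comm (e i) (F s t) by apply: comm_e_F; lia.
have heW : GRing.comm (e i) (K s * Kinv j * F j t).
  have hFe : GRing.comm (F j t) (e i) by apply/commr_sym/comm_e_F; lia.
  have := skewcomm_KKinv_mull (@Kweight_e_out s i ltac:(lia) ltac:(lia) ltac:(lia) ltac:(lia))
    (@Kweight_e_out j i ltac:(lia) ltac:(lia) ltac:(lia) ltac:(lia)) hFe.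
  by rewrite divr1 => /skewcomm1/commr_sym.
rewrite Eij_rec; last by lia.
rewrite (_ : _ && _ = par m i.+1 j && par m s t); last by rewrite /par; lia.
rewrite qcomm_nest_l // IH // qcommZr qcomm_mulr // -Eij_rec //; lia.
Qed.

Lemma bracket_Est_Fij i s j t : (1 <= i)%N -> (i < s)%N -> (s < j)%N -> (j < t)%N ->
  (t <= m + n)%N ->
  qcomm ((-1) ^+ (par m s t && par m i j)) (E s t) (F i j) =
    (Q j - (Q j)^-1) *: (F i s * E j t * Kinv s * K j).
Proof.
move=> + his; elim/ltn_ind_left: i s / his => [i|i s lt_is IH] hi hsj hjt ht.
  have hfE : GRing.comm (f i) (E i.+1 t) by apply: comm_f_E; lia.
  have hEf : GRing.comm (E j t) (f i) by apply/commr_sym/comm_f_E; lia.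
  have hWf : skewcomm (Q i.+1)^-1 (E j t * Kinv i.+1 * K j) (f i).
    have := skewcomm_KinvK_mulr (@Kweight_f i.+1 i ltac:(lia) ltac:(lia))
      (@Kweight_f_out j i ltac:(lia) ltac:(lia) ltac:(lia) ltac:(lia)) hEf.
    by rewrite Eweight_r // invrK div1r.
  rewrite Fij_rec // (_ : _ && _ = par m i.+1 t && par m i.+1 j); last by rewrite /par; lia.
  rewrite qcomm_nest_r // bracket_Est_Fsj // qcommZl (qcomm_skew _ hWf) scalerA Fij_base.
  by rewrite -[(Q i.+1)^-1 - _]opprB mulrN divfK ?Q_subV_neq0 // opprB !mulrA.
have hfE : GRing.comm (f i) (E s t) by apply: comm_f_E; lia.
have hWf : GRing.comm (E j t * Kinv s * K j) (f i).
  have hEf : GRing.comm (E j t) (f i) by apply/commr_sym/comm_f_E; lia.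
  have := skewcomm_KinvK_mulr (@Kweight_f_out s i ltac:(lia) ltac:(lia) ltac:(lia) ltac:(lia))
    (@Kweight_f_out j i ltac:(lia) ltac:(lia) ltac:(lia) ltac:(lia)) hEf.
  by rewrite divr1 => /skewcomm1.
rewrite Fij_rec; last by lia.
rewrite (_ : _ && _ = par m s t && par m i.+1 j); last by rewrite /par; lia.
rewrite qcomm_nest_r // IH // -!mulrA qcommZl qcomm_mull ?mulrA -?Fij_rec //; lia.
Qed.

End RootVectors.

Theorem lemma4p3 (C : numClosedFieldType) (m n : nat) (hm : (1 <= m)%N) (hn : (1 <= n)%N)
  (A : algType (Cq C)) (K Kinv e f : nat -> A)
  (hrel : Uq_relations (qind C) m n e f K Kinv)
  (i s j t : nat) (hi : (1 <= i)%N) (his : (i < s)%N) (hsj : (s < j)%N) (hjt : (j < t)%N)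
  (ht : (t <= m + n)%N) :
  scomm (par m i j) (par m s t) (Eij (qind C) m e i j) (Fij (qind C) m f s t) =
    ((qi (qind C) m j)^-1 - qi (qind C) m j) *:
      (K s * Kinv j * Fij (qind C) m f j t * Eij (qind C) m e i s) /\
  scomm (par m s t) (par m i j) (Eij (qind C) m e s t) (Fij (qind C) m f i j) =
    (qi (qind C) m j - (qi (qind C) m j)^-1) *:
      (Fij (qind C) m f i s * Eij (qind C) m e j t * Kinv s * K j).
Proof.
by rewrite !scommE; split; [apply: (bracket_Eij_Fst hrel) | apply: (bracket_Est_Fij hrel)].
Qed.
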